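(* Let $\sigma(u)=(u+1)\,\omega(u+1)$ for $u\ge 0$, where $\omega$ is the Buchstab function. Then for every integer $n\ge 1$ and every real $y\in[0,1]$, $$\sigma(n-y)=\sigma(n)+\sum_{j=1}^{n-1}(-1)^j\,\sigma(n-j)\,M_{j,n}(y).$$
   Context: The Buchstab function $\omega:[1,\infty)\to\mathbb{R}$ is the continuous function with $u\,\omega(u)=1$ for $u\in[1,2]$ and $u\,\omega'(u)=\omega(u-1)-\omega(u)$ for $u>2$. For integers $n>j>0$ and real $y\in[0,1]$ define $$M_{j,n}(y)=\sum_{n_1>n_2>\cdots>n_j>0}\ \prod_{i=1}^{j}\frac{z_i^{n_i}}{n_i},\qquad z_1=\frac{y}{n},\quad z_i=\frac{n+2-i}{n+1-i}\ \text{for } 1<i\le j,$$ the sum running over integers $n_1,\dots,n_j$. *)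

From Stdlib Require Import Reals Lra List.
From Coquelicot Require Import Coquelicot.
Open Scope R_scope.

(* Characterization of the Buchstab function omega on [1, +oo):
   - continuous on [1, +oo) (as a function restricted to that domain),
   - u * omega u = 1 for u in [1,2],
   - u * omega'(u) = omega(u-1) - omega(u) for u > 2.
   Values of omega below 1 are irrelevant. *)
Definition is_buchstab (omega : R -> R) : Prop :=
  (forall u, 1 <= u -> limit1_in omega (fun x => 1 <= x) (omega u) u) /\
  (forall u, 1 <= u <= 2 -> u * omega u = 1) /\
  (forall u, 2 < u -> derivable_pt_lim omega u ((omega (u - 1) - omega u) / u)).

Definition sigmaB (omega : R -> R) (u : R) : R := (u + 1) * omega (u + 1).

(* sum_{i = a}^{b} f i  (zero if b < a) *)
Definition sum_range (a b : nat) (f : nat -> R) : R :=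
  fold_right Rplus 0 (map f (seq a (S b - a))).

(* nested zs m = sum over m > a_1 > a_2 > ... > a_k > 0 of
   prod_i zs_i^{a_i} / a_i, where k = length zs (finite sum). *)
Fixpoint nested (zs : list R) (m : nat) : R :=
  match zs with
  | nil => 1
  | z :: zs' => sum_range 1 (m - 1) (fun a => z ^ a / INR a * nested zs' a)
  end.

Definition z_tail (j n : nat) : list R :=
  map (fun i => (INR n + 2 - INR i) / (INR n + 1 - INR i)) (seq 2 (j - 1)).

(* M_{j,n}(y) = sum_{n_1 > n_2 > ... > n_j > 0} prod_i z_i^{n_i}/n_i
   with z_1 = y/n: the outermost index n_1 ranges over all integers >= 1
   (an infinite series of nonnegative terms), the inner ones are finite. *)
Definition M (j n : nat) (y : R) : R :=
  Series (fun n1 : nat =>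
    if (n1 =? 0)%nat then 0
    else (y / INR n) ^ n1 / INR n1 * nested (z_tail j n) n1).

From Stdlib Require Import Reals Lra Lia List.
From Coquelicot Require Import Coquelicot.
Open Scope R_scope.

(* Write M_{0,n} := 1 and S_n(y) := sum_{j=0}^{n-1} (-1)^j sigma(n-j) M_{j,n}(y), so that the
   theorem reads sigma(n - y) = S_n(y).  We argue by induction on n >= 1.
   1. Each M_{j,n} (j < n) is a power series in y whose coefficients are bounded by
      k^(j-1) 2^(-k): the inner nested sums are at most k^(j-1) (prod_i z_i)^k, and the z_i
      telescope to n/(n-j+1).  Comparison with a derivative of a geometric series shows that
      the radius of convergence is at least 2, so M_{j,n} is smooth on [-1,1].
   2. Comparing coefficients gives the differential recursion
      (n - y) M_{j+1,n}'(y) = M_{j,n-1}(y), hence S_{n+1}'(y) = - S_n(y) / (n+1-y).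
   3. Since sigma'(u) = omega(u) for u > 1 and sigma(n - y) = (n+1-y) omega(n+1-y), the
      induction hypothesis shows that sigma(n+1-y) - S_{n+1}(y) has derivative 0 on (0,1);
      it vanishes at y = 0 because M_{j,n}(0) = 0 for j >= 1, hence everywhere on [0,1]. *)

Definition lsum (f : nat -> R) (l : list nat) : R := fold_right Rplus 0 (map f l).

Lemma lsum_cons (f : nat -> R) (a : nat) (l : list nat) : lsum f (a :: l) = f a + lsum f l.
Proof. reflexivity. Qed.

Lemma sum_range_from_1 (m : nat) (f : nat -> R) : sum_range 1 m f = lsum f (seq 1 m).
Proof. unfold sum_range, lsum. now replace (S m - 1)%nat with m by lia. Qed.

Lemma lsum_app (f : nat -> R) (l1 l2 : list nat) :
  lsum f (l1 ++ l2) = lsum f l1 + lsum f l2.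
Proof. unfold lsum; induction l1 as [|a l1 IH]; simpl; [ring | rewrite IH; ring]. Qed.

Lemma lsum_ext (f g : nat -> R) (l : list nat) :
  (forall a, In a l -> f a = g a) -> lsum f l = lsum g l.
Proof.
  unfold lsum; induction l as [|a l IH]; intros H; simpl; [reflexivity|].
  rewrite H, IH; auto with datatypes.
Qed.

Lemma lsum_scal (c : R) (f : nat -> R) (l : list nat) :
  c * lsum f l = lsum (fun a => c * f a) l.
Proof. unfold lsum; induction l as [|a l IH]; simpl; [ring | rewrite <- IH; ring]. Qed.

Lemma lsum_zero (l : list nat) : lsum (fun _ => 0) l = 0.
Proof. unfold lsum; induction l as [|a l IH]; simpl; [reflexivity | rewrite IH; ring]. Qed.

Lemma lsum_shift (f : nat -> R) (k m : nat) :
  lsum f (seq (S k) m) = lsum (fun a => f (S a)) (seq k m).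
Proof. unfold lsum. now rewrite <- seq_shift, map_map. Qed.

Lemma lsum_bound (f : nat -> R) (l : list nat) (B : R) :
  (forall a, In a l -> 0 <= f a <= B) -> 0 <= lsum f l <= INR (length l) * B.
Proof.
  unfold lsum; induction l as [|a l IH]; intros H; cbn [fold_right map length].
  - simpl; lra.
  - assert (Ha := H a (in_eq a l)).
    assert (Hl := IH (fun b Hb => H b (in_cons a b l Hb))).
    rewrite S_INR; lra.
Qed.

Lemma lsum_derive (F F' : nat -> R -> R) (l : list nat) (y : R) :
  (forall a, In a l -> is_derive (F a) y (F' a y)) ->
  is_derive (fun t => lsum (fun a => F a t) l) y (lsum (fun a => F' a y) l).
Proof.
  unfold lsum; induction l as [|a l IH]; intros H; simpl.
  - apply (is_derive_const 0).
  - apply (is_derive_plus (F a) (fun t => fold_right Rplus 0 (map (fun a => F a t) l)));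
      auto with datatypes.
Qed.

Definition prodR (zs : list R) : R := fold_right Rmult 1 zs.

Lemma nested_cons (z : R) (zs : list R) (k : nat) :
  nested (z :: zs) k = lsum (fun a => z ^ a / INR a * nested zs a) (seq 1 (k - 1)).
Proof. apply sum_range_from_1. Qed.

Lemma nested_cons_succ (z : R) (zs : list R) (k : nat) : (1 <= k)%nat ->
  nested (z :: zs) (S k) = nested (z :: zs) k + z ^ k / INR k * nested zs k.
Proof.
  intros Hk; rewrite !nested_cons.
  replace (S k - 1)%nat with (S (k - 1)) by lia.
  rewrite seq_S, lsum_app; replace (1 + (k - 1))%nat with k by lia.
  unfold lsum at 2; simpl; ring.
Qed.

Lemma prodR_ge1 (zs : list R) : List.Forall (fun z => 1 <= z) zs -> 1 <= prodR zs.
Proof.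
  induction 1 as [|z zs Hz _ IH]; simpl; [lra|].
  rewrite <- (Rmult_1_l 1) at 1. apply Rmult_le_compat; lra.
Qed.

Lemma nested_bounds (zs : list R) (k : nat) :
  List.Forall (fun z => 1 <= z) zs ->
  0 <= nested zs k <= INR k ^ length zs * prodR zs ^ k.
Proof.
  intros Hzs; revert k; induction Hzs as [|z zs Hz Hzs IH]; intros k.
  - simpl; rewrite pow1; lra.
  - assert (HP := prodR_ge1 zs Hzs).
    set (q := z * prodR zs).
    assert (Hq : 1 <= q) by (unfold q; rewrite <- (Rmult_1_l 1); apply Rmult_le_compat; lra).
    assert (Hterm : forall a, In a (seq 1 (k - 1)) ->
      0 <= z ^ a / INR a * nested zs a <= INR k ^ length zs * q ^ k).
    { intros a Ha; apply in_seq in Ha.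
      assert (Ha1 : 1 <= INR a) by (apply (le_INR 1); lia).
      assert (Hak : INR a <= INR k) by (apply le_INR; lia).
      destruct (IH a) as [N0 N1].
      assert (Hza : 0 <= z ^ a / INR a) by (apply Rdiv_le_0_compat; [apply pow_le|]; lra).
      assert (Hdiv : z ^ a / INR a <= z ^ a).
      { apply Rmult_le_reg_r with (INR a); [lra|].
        unfold Rdiv; rewrite Rmult_assoc, Rinv_l by lra.
        assert (0 <= z ^ a) by (apply pow_le; lra). nra. }
      split; [now apply Rmult_le_pos|].
      apply Rle_trans with (z ^ a * (INR a ^ length zs * prodR zs ^ a)).
      { apply Rmult_le_compat; auto. }
      replace (z ^ a * (INR a ^ length zs * prodR zs ^ a))
        with (INR a ^ length zs * q ^ a) by (unfold q; rewrite Rpow_mult_distr; ring).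
      apply Rmult_le_compat; try (apply pow_le; lra).
      + apply pow_incr; lra.
      + apply Rle_pow; [lra | lia]. }
    destruct (lsum_bound _ _ _ Hterm) as [S0 S1].
    rewrite length_seq in S1.
    assert (Hk : INR (k - 1) <= INR k) by (apply le_INR; lia).
    assert (0 <= INR k ^ length zs * q ^ k)
      by (apply Rmult_le_pos; apply pow_le; [apply pos_INR | lra]).
    rewrite nested_cons; cbn [length prodR fold_right]; fold (prodR zs); fold q.
    split; [exact S0|]. simpl pow. nra.
Qed.

(* The weights z_i = (n+2-i)/(n+1-i) of M_{j,n}: peeling off z_2 = n/(n-1) leaves the
   weights of M_{j-1,n-1}; all weights are >= 1 and their product telescopes. *)
Lemma z_tail_cons (j n : nat) : (1 <= n)%nat ->
  z_tail (S (S j)) n = INR n / (INR n - 1) :: z_tail (S j) (n - 1).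
Proof.
  intros Hn; unfold z_tail.
  replace (S (S j) - 1)%nat with (S j) by lia; replace (S j - 1)%nat with j by lia.
  cbn [seq map]; f_equal.
  - f_equal; simpl; ring.
  - rewrite <- seq_shift, map_map; apply map_ext; intros i.
    rewrite minus_INR, S_INR by lia; simpl; f_equal; ring.
Qed.

Lemma z_tail_length (j n : nat) : length (z_tail j n) = (j - 1)%nat.
Proof. unfold z_tail; now rewrite length_map, length_seq. Qed.

Lemma z_tail_ge1 (j n : nat) : (j <= n)%nat -> List.Forall (fun z => 1 <= z) (z_tail j n).
Proof.
  intros Hjn; apply Forall_forall; intros z Hz.
  unfold z_tail in Hz; apply in_map_iff in Hz as [i [<- Hi]]; apply in_seq in Hi.
  assert (Hin : INR i <= INR n) by (apply le_INR; lia).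
  apply Rmult_le_reg_r with (INR n + 1 - INR i); [lra|].
  unfold Rdiv; rewrite Rmult_assoc, Rinv_l by lra; lra.
Qed.

Lemma z_tail_prod (j n : nat) : (j < n)%nat ->
  prodR (z_tail (S j) n) = INR n / (INR n - INR j).
Proof.
  revert n; induction j as [|j IH]; intros n Hjn.
  - assert (0 < INR n) by (apply lt_0_INR; lia).
    simpl; field; lra.
  - rewrite z_tail_cons by lia; cbn [prodR fold_right]; fold (prodR (z_tail (S j) (n - 1))).
    rewrite IH, minus_INR, (S_INR j) by lia.
    assert (INR j + 2 <= INR n)
      by (replace 2 with (INR 2) by reflexivity; rewrite <- plus_INR; apply le_INR; lia).
    assert (0 <= INR j) by apply pos_INR.
    replace (INR 1) with 1 by reflexivity; field; split; lra.
Qed.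

Lemma CV_radius_dominated (a b : nat -> R) :
  (forall k, Rabs (a k) <= Rabs (b k)) -> Rbar_le (CV_radius b) (CV_radius a).
Proof.
  intros Hab.
  destruct (CV_radius_bounded a) as [Ha _]; destruct (CV_radius_bounded b) as [_ Hb].
  apply Hb; intros r [B HB]; apply Ha; exists B; intros k.
  apply Rle_trans with (2 := HB k); rewrite !Rabs_mult.
  apply Rmult_le_compat_r; [apply Rabs_pos | apply Hab].
Qed.

(* k^m <= (k+1)(k+2)...(k+m), the coefficient factor of the m-th derivative. *)
Lemma pow_le_fact_ratio (k m : nat) :
  INR k ^ m <= INR (Factorial.fact (k + m)) / INR (Factorial.fact k).
Proof.
  assert (Hk : 0 < INR (Factorial.fact k)) by apply INR_fact_lt_0.
  induction m as [|m IH].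
  - rewrite Nat.add_0_r; simpl; right; field; lra.
  - rewrite Nat.add_succ_r, fact_simpl, mult_INR.
    assert (INR k <= INR (S (k + m))) by (apply le_INR; lia).
    assert (0 <= INR k ^ m) by (apply pow_le, pos_INR).
    replace (INR (S (k + m)) * INR (Factorial.fact (k + m)) / INR (Factorial.fact k))
      with (INR (S (k + m)) * (INR (Factorial.fact (k + m)) / INR (Factorial.fact k)))
      by (field; lra).
    simpl pow; apply Rmult_le_compat; auto using pos_INR.
Qed.

Lemma CV_radius_geom (c : R) : 0 < c -> CV_radius (fun k => c ^ k) = / c.
Proof.
  intros Hc; apply CV_radius_finite_DAlembert; auto.
  - intros k; apply pow_nonzero; lra.
  - apply (is_lim_seq_ext (fun _ => c)); [|apply is_lim_seq_const].
    intros k; replace (c ^ S k / c ^ k) with c by (simpl; field; apply pow_nonzero; lra).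
    rewrite Rabs_pos_eq; lra.
Qed.

(* Coefficients O(k^m c^k) give radius at least 1/c: they are dominated by the
   coefficients of the m-th derivative of the geometric series sum c^k y^k. *)
Lemma CV_radius_poly_geom_bound (a : nat -> R) (m : nat) (c : R) :
  0 < c -> (forall k, Rabs (a k) <= INR k ^ m * c ^ k) -> Rbar_le (/ c) (CV_radius a).
Proof.
  intros Hc Ha.
  set (b := PS_scal (/ c ^ m) (PS_derive_n m (fun k => c ^ k))).
  assert (Hb : CV_radius b = / c).
  { unfold b; rewrite CV_radius_scal, CV_radius_derive_n
      by (apply Rinv_neq_0_compat, pow_nonzero; lra).
    now apply CV_radius_geom. }
  rewrite <- Hb; apply CV_radius_dominated; intros k.
  assert (Hcm : 0 < c ^ m) by (apply pow_lt; lra).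
  assert (Hck : 0 < c ^ k) by (apply pow_lt; lra).
  assert (Hf : 0 < INR (Factorial.fact k)) by apply INR_fact_lt_0.
  assert (Hbk : b k = INR (Factorial.fact (k + m)) / INR (Factorial.fact k) * c ^ k).
  { unfold b, PS_scal, PS_derive_n; change scal with Rmult; simpl; rewrite pow_add; field; lra. }
  rewrite Hbk, (Rabs_pos_eq (_ * _)).
  - apply Rle_trans with (1 := Ha k); apply Rmult_le_compat_r; [lra | apply pow_le_fact_ratio].
  - apply Rmult_le_pos; [apply Rdiv_le_0_compat; [apply pos_INR | lra] | lra].
Qed.

(* M_{j,n} as a power series in y, extended by M_{0,n} = 1 (coefficients 1, 0, 0, ...). *)
Definition Mcoef (j n k : nat) : R :=
  match j, k with
  | O, O => 1
  | O, S _ => 0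
  | S _, O => 0
  | S _, S _ => (/ INR n) ^ k / INR k * nested (z_tail j n) k
  end.

Definition Mser (j n : nat) (y : R) : R := PSeries (Mcoef j n) y.

Lemma M_eq_Mser (j n : nat) (y : R) : (1 <= j)%nat -> M j n y = Mser j n y.
Proof.
  intros Hj; destruct j as [|j]; [lia|].
  unfold M, Mser, PSeries; apply Series_ext; intros [|k]; simpl Nat.eqb; cbv iota.
  - simpl; ring.
  - cbn [Mcoef]; unfold Rdiv; rewrite Rpow_mult_distr; ring.
Qed.

Lemma Mser_0 (n : nat) (y : R) : Mser 0 n y = 1.
Proof.
  apply is_series_unique, (is_series_ext (fun k => 0 ^ k)).
  - intros [|k]; simpl; ring.
  - replace 1 with (/ (1 - 0)) by (rewrite Rminus_0_r; apply Rinv_1).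
    apply is_series_geom; rewrite Rabs_R0; lra.
Qed.

Lemma Mser_at_0 (j n : nat) : (1 <= j)%nat -> Mser j n 0 = 0.
Proof. intros Hj; unfold Mser; rewrite PSeries_0; destruct j; [lia | reflexivity]. Qed.

Lemma Mcoef_bound (j n k : nat) : (j < n)%nat ->
  Rabs (Mcoef j n k) <= INR k ^ pred j * (/ 2) ^ k.
Proof.
  intros Hjn.
  assert (Hpos : 0 <= INR k ^ pred j * (/ 2) ^ k)
    by (apply Rmult_le_pos; apply pow_le; [apply pos_INR | lra]).
  destruct j as [|i], k as [|k]; cbn [Mcoef];
    try (rewrite Rabs_R0; exact Hpos); [rewrite Rabs_R1; simpl; lra|].
  cbn [pred]; set (K := INR (S k)); set (N := nested (z_tail (S i) n) (S k)).
  assert (HK : 1 <= K) by (apply (le_INR 1); lia).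
  assert (Hin : INR i + 2 <= INR n)
    by (replace 2 with (INR 2) by reflexivity; rewrite <- plus_INR; apply le_INR; lia).
  assert (Hi : 0 <= INR i) by apply pos_INR.
  destruct (nested_bounds (z_tail (S i) n) (S k) (z_tail_ge1 (S i) n ltac:(lia))) as [N0 N1].
  rewrite z_tail_length, z_tail_prod in N1 by lia; replace (S i - 1)%nat with i in N1 by lia.
  fold N in N0; fold K N in N1.
  assert (Hp : 0 <= (/ INR n) ^ S k) by (apply pow_le, Rlt_le, Rinv_0_lt_compat; lra).
  rewrite Rabs_pos_eq by (apply Rmult_le_pos; [apply Rdiv_le_0_compat|]; lra).
  apply Rle_trans with ((/ INR n) ^ S k * N).
  { apply Rmult_le_compat_r; [lra|].
    unfold Rdiv; rewrite <- (Rmult_1_r ((/ INR n) ^ S k)) at 2.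
    apply Rmult_le_compat_l; [lra|]. rewrite <- Rinv_1; apply Rinv_le_contravar; lra. }
  apply Rle_trans with ((/ INR n) ^ S k * (K ^ i * (INR n / (INR n - INR i)) ^ S k)).
  { now apply Rmult_le_compat_l. }
  replace ((/ INR n) ^ S k * (K ^ i * (INR n / (INR n - INR i)) ^ S k))
    with (K ^ i * (/ (INR n - INR i)) ^ S k).
  2:{ replace (/ (INR n - INR i)) with (/ INR n * (INR n / (INR n - INR i))) by (field; lra).
      rewrite Rpow_mult_distr; ring. }
  apply Rmult_le_compat_l; [apply pow_le; lra|].
  apply pow_incr; split; [apply Rlt_le, Rinv_0_lt_compat; lra | apply Rinv_le_contravar; lra].
Qed.

Lemma Mcoef_radius (j n : nat) (y : R) : (j < n)%nat -> Rabs y <= 1 ->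
  Rbar_lt (Rabs y) (CV_radius (Mcoef j n)).
Proof.
  intros Hjn Hy.
  apply Rbar_lt_le_trans with (Finite 2); [simpl; lra|].
  replace 2 with (/ / 2) by (rewrite Rinv_inv; reflexivity).
  apply (CV_radius_poly_geom_bound _ (pred j)); [lra|].
  intros k; now apply Mcoef_bound.
Qed.

(* Coefficient form of (n - y) M_{j+1,n}'(y) = M_{j,n-1}(y): the coefficients of
   n M' - y M' are those of M_{j,n-1}. *)
Lemma Mcoef_derive_rec (j n k : nat) : (2 <= n)%nat ->
  INR n * PS_derive (Mcoef (S j) n) k - PS_incr_1 (PS_derive (Mcoef (S j) n)) k
  = Mcoef j (n - 1) k.
Proof.
  intros Hn.
  assert (Hn1 : INR (n - 1) = INR n - 1) by (rewrite minus_INR by lia; reflexivity).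
  assert (H2 : 2 <= INR n) by (apply (le_INR 2); lia).
  unfold PS_derive; cbn [Mcoef].
  destruct j as [|j], k as [|k]; cbn [PS_incr_1 Mcoef]; try change (zero : R) with 0.
  - simpl; field; lra.
  - change (z_tail 1 n) with (@nil R); cbn [nested].
    assert (0 < INR (S k)) by (apply lt_0_INR; lia).
    assert (0 < INR (S (S k))) by (apply lt_0_INR; lia).
    simpl pow; field; lra.
  - rewrite z_tail_cons, nested_cons by lia; unfold lsum; simpl; ring.
  - rewrite z_tail_cons by lia; rewrite (nested_cons_succ _ _ (S k)) by lia.
    set (z := INR n / (INR n - 1)); set (N := nested (z :: _) (S k)).
    assert (0 < INR (S k)) by (apply lt_0_INR; lia).
    assert (0 < INR (S (S k))) by (apply lt_0_INR; lia).
    assert (Hz : (/ INR n) ^ S k * z ^ S k = (/ INR (n - 1)) ^ S k).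
    { rewrite <- Rpow_mult_distr, Hn1; f_equal; unfold z; field; lra. }
    rewrite <- Hz; simpl pow; field; lra.
Qed.

Lemma Mser_derive (j n : nat) (y : R) : (S j < n)%nat -> Rabs y <= 1 ->
  is_derive (Mser (S j) n) y (Mser j (n - 1) y / (INR n - y)).
Proof.
  intros Hjn Hy.
  assert (Hr := Mcoef_radius (S j) n y Hjn Hy).
  assert (Hex := ex_pseries_derive _ _ Hr).
  assert (Hny : 0 < INR n - y).
  { assert (2 <= INR n) by (apply (le_INR 2); lia). apply Rabs_le_between in Hy; lra. }
  assert (Hrec : (INR n - y) * PSeries (PS_derive (Mcoef (S j) n)) y = Mser j (n - 1) y).
  { rewrite Rmult_minus_distr_r, <- PSeries_scal, <- PSeries_incr_1, <- PSeries_minus.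
    - apply PSeries_ext; intros k; rewrite <- Mcoef_derive_rec by lia; reflexivity.
    - apply ex_pseries_scal; [apply Rmult_comm | exact Hex].
    - now apply ex_pseries_incr_1. }
  replace (Mser j (n - 1) y / (INR n - y)) with (PSeries (PS_derive (Mcoef (S j) n)) y)
    by (rewrite <- Hrec; field; lra).
  now apply is_derive_PSeries.
Qed.

(* The right-hand side S_n(y) of the theorem, with the sigma(n) term as its j = 0 term. *)
Definition Sfun (omega : R -> R) (n : nat) (y : R) : R :=
  lsum (fun j => (-1) ^ j * sigmaB omega (INR n - INR j) * Mser j n y) (seq 0 n).

Lemma sum_range_eq_Sfun (omega : R -> R) (n : nat) (y : R) : (1 <= n)%nat ->
  sigmaB omega (INR n) +
  sum_range 1 (n - 1) (fun j => (-1) ^ j * sigmaB omega (INR n - INR j) * M j n y)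
  = Sfun omega n y.
Proof.
  intros Hn; destruct n as [|n]; [lia|].
  unfold Sfun; cbn [seq]; rewrite lsum_cons, Mser_0, sum_range_from_1.
  replace (S n - 1)%nat with n by lia.
  f_equal; [change (INR 0) with 0; rewrite Rminus_0_r, pow_O; ring|].
  apply lsum_ext; intros j Hj; apply in_seq in Hj; rewrite M_eq_Mser by lia; reflexivity.
Qed.

Lemma Sfun_at_0 (omega : R -> R) (n : nat) : (1 <= n)%nat ->
  Sfun omega n 0 = sigmaB omega (INR n).
Proof.
  intros Hn; destruct n as [|n]; [lia|].
  unfold Sfun; cbn [seq]; rewrite lsum_cons, Mser_0.
  rewrite (lsum_ext _ (fun _ => 0)), lsum_zero.
  - change (INR 0) with 0; rewrite Rminus_0_r, pow_O; ring.
  - intros j Hj; apply in_seq in Hj; rewrite Mser_at_0 by lia; ring.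
Qed.

Lemma Sfun_derive (omega : R -> R) (n : nat) (y : R) : (1 <= n)%nat -> Rabs y <= 1 ->
  is_derive (Sfun omega (S n)) y (- Sfun omega n y / (INR (S n) - y)).
Proof.
  intros Hn Hy.
  set (D := fun a => match a with O => 0 | S i => Mser i n y / (INR (S n) - y) end).
  assert (HD : forall a, In a (seq 0 (S n)) -> is_derive (Mser a (S n)) y (D a)).
  { intros [|i] Hi; apply in_seq in Hi.
    - apply (is_derive_ext (fun _ => 1)); [intros t; symmetry; apply Mser_0|].
      apply (is_derive_const 1).
    - assert (Hd := Mser_derive i (S n) y ltac:(lia) Hy).
      now replace (S n - 1)%nat with n in Hd by lia. }
  assert (HS := lsum_derive
    (fun a t => (-1) ^ a * sigmaB omega (INR (S n) - INR a) * Mser a (S n) t)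
    (fun a _ => (-1) ^ a * sigmaB omega (INR (S n) - INR a) * D a) (seq 0 (S n)) y
    (fun a Ha => is_derive_scal _ _ _ _ (HD a Ha))).
  assert (Hny : 0 < INR (S n) - y).
  { rewrite S_INR; assert (1 <= INR n) by (apply (le_INR 1); lia).
    apply Rabs_le_between in Hy; lra. }
  enough (E : lsum (fun a => (-1) ^ a * sigmaB omega (INR (S n) - INR a) * D a) (seq 0 (S n))
              = - Sfun omega n y / (INR (S n) - y)) by (rewrite <- E; exact HS).
  cbn [seq]; rewrite lsum_cons, lsum_shift.
  rewrite (lsum_ext _ (fun i => - / (INR (S n) - y) *
                                ((-1) ^ i * sigmaB omega (INR n - INR i) * Mser i n y))).
  - rewrite <- lsum_scal; unfold D, Sfun; simpl pow; field; lra.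
  - intros i _; unfold D.
    replace (INR (S n) - INR (S i)) with (INR n - INR i) by (rewrite !S_INR; ring).
    simpl pow; field; lra.
Qed.

Lemma const_on_unit_interval (f : R -> R) :
  (forall x, 0 <= x <= 1 -> continuity_pt f x) ->
  (forall x, 0 < x < 1 -> is_derive f x 0) -> forall x, 0 <= x <= 1 -> f x = f 0.
Proof.
  intros Hc Hd.
  assert (pr : forall x, 0 < x < 1 -> derivable_pt f x)
    by (intros x Hx; exists 0; apply is_derive_Reals, Hd, Hx).
  intros x Hx; apply (null_derivative_loc f 0 1 pr Hc); auto.
  intros t Ht; apply derive_pt_eq_0, is_derive_Reals, Hd, Ht.
Qed.

Lemma limit1_in_interior_continuity (f : R -> R) (u : R) :
  limit1_in f (fun x => 1 <= x) (f u) u -> 1 < u -> continuity_pt f u.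
Proof.
  intros Hl Hu eps Heps; destruct (Hl eps Heps) as [alp [Ha H]].
  exists (Rmin alp (u - 1)); split; [apply Rmin_pos; lra|].
  intros x [_ Hd]; apply H; simpl in Hd |- *; unfold R_dist in *.
  assert (Hd1 := Rmin_l alp (u - 1)); assert (Hd2 := Rmin_r alp (u - 1)).
  apply Rabs_lt_between in Hd; split; [lra | apply Rabs_lt_between; lra].
Qed.

Section Buchstab.
Variable omega : R -> R.
Hypothesis Hb : is_buchstab omega.

Lemma sigma_on_unit_interval (u : R) : 0 <= u <= 1 -> sigmaB omega u = 1.
Proof. intros Hu; destruct Hb as [_ [H12 _]]; apply H12; lra. Qed.

(* The delay equation for omega becomes sigma'(u) = omega(u) for u > 1. *)
Lemma sigma_derive (u : R) : 1 < u -> is_derive (sigmaB omega) u (omega u).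
Proof.
  intros Hu; destruct Hb as [_ [_ Hd]].
  assert (Hw : is_derive omega (u + 1) ((omega u - omega (u + 1)) / (u + 1))).
  { apply is_derive_Reals; assert (H := Hd (u + 1) ltac:(lra)).
    now replace (u + 1 - 1) with u in H by ring. }
  assert (Hs : is_derive (fun t => t + 1) u 1) by (auto_derive; auto; ring).
  assert (H := is_derive_mult _ _ u _ _ Hs (is_derive_comp omega _ u _ _ Hw Hs) Rmult_comm).
  unfold sigmaB; replace (omega u) with (plus (mult 1 (omega (u + 1)))
    (mult (u + 1) (scal 1 ((omega u - omega (u + 1)) / (u + 1))))).
  - exact H.
  - change (1 * omega (u + 1) + (u + 1) * (1 * ((omega u - omega (u + 1)) / (u + 1)))
            = omega u).
    field; lra.
Qed.

Lemma sigma_continuous (u : R) : 1 <= u -> continuity_pt (sigmaB omega) u.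
Proof.
  intros Hu; destruct Hb as [Hc _]; unfold sigmaB.
  apply continuity_pt_mult.
  - apply continuity_pt_plus; [apply continuity_pt_id |].
    apply continuity_pt_const; intros ? ?; reflexivity.
  - apply (continuity_pt_comp (fun t => t + 1) omega u).
    + apply continuity_pt_plus; [apply continuity_pt_id |].
      apply continuity_pt_const; intros ? ?; reflexivity.
    + apply limit1_in_interior_continuity; [apply Hc |]; lra.
Qed.

Lemma sigma_reflected_derive (N t : R) : 1 < N - t ->
  is_derive (fun s => sigmaB omega (N - s)) t (- omega (N - t)).
Proof.
  intros Ht.
  assert (Hlin : is_derive (fun s => N - s) t (-1)) by (auto_derive; auto; ring).
  assert (H := is_derive_comp (sigmaB omega) _ t _ _ (sigma_derive (N - t) Ht) Hlin).
  replace (- omega (N - t)) with (scal (-1) (omega (N - t))); [exact H|].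
  change (-1 * omega (N - t) = - omega (N - t)); ring.
Qed.

Lemma sigma_expansion (m : nat) (y : R) : 0 <= y <= 1 ->
  sigmaB omega (INR (S m) - y) = Sfun omega (S m) y.
Proof.
  revert y; induction m as [|m IH]; intros y Hy.
  - unfold Sfun; cbn [seq]; rewrite lsum_cons, Mser_0.
    change (INR 1) with 1; change (INR 0) with 0.
    rewrite !sigma_on_unit_interval by lra; unfold lsum; simpl; ring.
  - set (N := S (S m)).
    assert (HN : INR N = INR m + 2) by (unfold N; rewrite !S_INR; ring).
    assert (Hm : 0 <= INR m) by apply pos_INR.
    set (h := fun t => sigmaB omega (INR N - t) - Sfun omega N t).
    assert (HS : forall t, Rabs t <= 1 ->
      is_derive (Sfun omega N) t (- Sfun omega (S m) t / (INR N - t)))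
      by (intros t Ht; apply Sfun_derive; [lia | exact Ht]).
    assert (Hcont : forall t, 0 <= t <= 1 -> continuity_pt h t).
    { intros t Ht; apply continuity_pt_minus.
      - apply (continuity_pt_comp (fun s => INR N - s) (sigmaB omega)); [reg|].
        apply sigma_continuous; lra.
      - apply derivable_continuous_pt; eexists; apply is_derive_Reals, HS.
        apply Rabs_le; lra. }
    (* h' = - omega(N - t) + sigma(N-1-t)/(N-t) = 0 by the induction hypothesis *)
    assert (Hder : forall t, 0 < t < 1 -> is_derive h t 0).
    { intros t Ht.
      assert (Hrefl : sigmaB omega (INR (S m) - t) = (INR N - t) * omega (INR N - t)).
      { unfold sigmaB.
        now replace (INR (S m) - t + 1) with (INR N - t) by (rewrite HN, S_INR; ring). }
      assert (D := is_derive_minus _ _ t _ _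
        (sigma_reflected_derive (INR N) t ltac:(lra)) (HS t ltac:(apply Rabs_le; lra))).
      rewrite <- IH, Hrefl in D by lra.
      replace (minus _ _) with 0 in D; [exact D|].
      change (0 = - omega (INR N - t) - - ((INR N - t) * omega (INR N - t)) / (INR N - t)).
      field; lra. }
    assert (E := const_on_unit_interval h Hcont Hder y Hy).
    unfold h in E; rewrite Sfun_at_0, Rminus_0_r in E by (unfold N; lia); lra.
Qed.

End Buchstab.

Theorem theorem2 :
  forall omega : R -> R, is_buchstab omega ->
  forall (n : nat) (y : R), (1 <= n)%nat -> 0 <= y <= 1 ->
  sigmaB omega (INR n - y) =
    sigmaB omega (INR n) +
    sum_range 1 (n - 1)
      (fun j => (-1) ^ j * sigmaB omega (INR n - INR j) * M j n y).
Proof.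
  intros omega Hb n y Hn Hy.
  rewrite sum_range_eq_Sfun by exact Hn.
  destruct n as [|m]; [lia|].
  now apply sigma_expansion.
Qed.
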